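(* Let $H\in(1/2,1)$, $c\in(0,2^{2H-2})$ and $\lambda\in(0,c)$. For every $n\in\mathbb{N}$ and every pair of disjoint sets $A,B\subseteq\{1,2,\dots,n\}$, \[ p_n\,c^{|A|-1}\,D^\circ_H(A,B)>0 . \]
   Context: For $n\in\mathbb{N}$ put $p_n=\lambda n^{2H-2}$. For a finite set $A=\{i_0<i_1<\dots<i_k\}\subset\mathbb{N}\cup\{0\}$ define $L^\circ_H(A)=\prod_{j=1}^{k}|i_j-i_{j-1}|^{2H-2}$; if $|A|=1$ set $L^\circ_H(A)=1$, and set $L^\circ_H(\emptyset)=c/p_n$. For disjoint finite sets $A,B\subset\mathbb{N}\cup\{0\}$ define $D^\circ_H(A,B)=\sum_{B'\subseteq B}(-1)^{|B'|}c^{|B'|}L^\circ_H(A\cup B')$ (in particular $D^\circ_H(A,\emptyset)=L^\circ_H(A)$). *)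

From HB Require Import structures.
From mathcomp Require Import all_boot all_order all_algebra.
From mathcomp Require Import all_classical all_reals all_analysis.
Set Implicit Arguments. Unset Strict Implicit. Unset Printing Implicit Defensive.
Import Order.TTheory GRing.Theory Num.Theory.
Local Open Scope ring_scope.

Definition pn (R : realType) (H lam : R) (n : nat) : R :=
  lam * ((n%:R : R) `^ (2 * H - 2)).

Definition Lseq (R : realType) (H c lam : R) (n : nat) (s : seq nat) : R :=
  match s with
  | [::] => c / pn H lam n
  | x :: t => \prod_(d <- pairmap (fun a b => (b - a)%N) x t)
                ((d%:R : R) `^ (2 * H - 2))
  end.

Definition Lcirc (R : realType) (H c lam : R) (n : nat) (A : {set 'I_n.+1}) : R :=
  Lseq H c lam n (sort leq [seq val i | i <- enum A]).

Definition Dcirc (R : realType) (H c lam : R) (n : nat) (A B : {set 'I_n.+1}) : R :=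
  \sum_(B' in powerset B) (-1) ^+ #|B'| * c ^+ #|B'| * Lcirc H c lam (A :|: B').

(* Up to the factor p_n c^(|A|-1), D°_H(A,B) is the inclusion-exclusion
   formula for the probability that a delayed renewal process on {0,...,n}
   has a renewal at every point of A and at no point of B: its renewal
   sequence is u_0 = 1, u_d = c d^(2H-2), and its first renewal after 0 has
   weight p_n.  Since c < 2^(2H-2), u satisfies u_1 u_m < u_(m+1) and is
   strictly log-convex, so Kaluza's argument makes all first-return
   probabilities f_d positive with total mass below 1, and lambda < c keeps the
   delay a sub-probability.  The probability is then positive: building the
   configuration from left to right, the weight of paths whose last renewal
   before p is w stays nonnegative and is positive for some w. *)

From HB Require Import structures.
From mathcomp Require Import all_boot all_order all_algebra.
From mathcomp Require Import all_classical all_reals all_analysis.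
From mathcomp Require Import ring lra zify.
Set Implicit Arguments.
Unset Strict Implicit.
Import Order.TTheory GRing.Theory Num.Theory.
Local Open Scope ring_scope.

Lemma sumr_nat_gt0 (R : numDomainType) (g : nat -> R) p w0 :
  (forall w, (w < p)%N -> 0 <= g w) -> (w0 < p)%N -> 0 < g w0 ->
  0 < \sum_(0 <= w < p) g w.
Proof.
move=> g_ge0 w0p gw0; rewrite big_mkord (bigD1 (Ordinal w0p)) //=.
by rewrite ltr_pwDl // sumr_ge0 // => i _; apply: g_ge0.
Qed.

Section Renewal.
Variables (R : realType) (u : nat -> R).
Hypotheses (u0 : u 0 = 1) (u_gt0 : forall d, 0 < u d)
  (u_lt1 : forall d, (0 < d)%N -> u d < 1)
  (u_nonincr : forall j m, (j <= m)%N -> u m <= u j)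
  (u_logconvex : forall j m, (j < m)%N -> u j.+1 * u m < u m.+1 * u j).

Fixpoint first_return_fuel (k d : nat) : R :=
  if k is k'.+1 then u d - \sum_(1 <= j < d) u j * first_return_fuel k' (d - j)
  else 0.

Definition first_return (d : nat) : R := first_return_fuel d.+1 d.

Lemma first_return_fuelS k d :
  first_return_fuel k.+1 d = u d - \sum_(1 <= j < d) u j * first_return_fuel k (d - j).
Proof. by []. Qed.

Lemma first_return_fuel_stable k d : first_return_fuel (d.+1 + k) d = first_return d.
Proof.
have step m k' : (m < k')%N -> first_return_fuel k'.+1 m = first_return_fuel k' m.
  elim: k' m => [//|k' IH] m mk; rewrite first_return_fuelS [RHS]first_return_fuelS.
  congr (_ - _).
  by apply: eq_big_nat => j /andP[j1 jm]; rewrite IH //; lia.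
by elim: k => [|k IH]; rewrite ?addn0 // addnS step ?IH //; lia.
Qed.

Lemma first_return_rec d :
  first_return d = u d - \sum_(1 <= j < d) u j * first_return (d - j).
Proof.
rewrite {1}/first_return first_return_fuelS; congr (_ - _); apply: eq_big_nat => j /andP[j1 jd].
by rewrite -(first_return_fuel_stable (j - 1) (d - j)); congr (_ * first_return_fuel _ _); lia.
Qed.

Lemma renewal_eq d : (0 < d)%N -> u d = \sum_(0 <= j < d) u j * first_return (d - j).
Proof.
move=> d0; rewrite big_ltn // subn0 u0 mul1r.
have := first_return_rec d; lra.
Qed.

(* Subtracting u_{m+1}/u_m times the renewal equation at m from the one at m+1
   expresses f_{m+1} through earlier f's with coefficients that log-convexity
   makes positive (Kaluza's argument). *)
Lemma first_return_S_expansion m : (0 < m)%N ->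
  first_return m.+1 =
  \sum_(0 <= j < m) (u m.+1 / u m * u j - u j.+1) * first_return (m - j).
Proof.
move=> m0; rewrite first_return_rec.
have -> : \sum_(1 <= j < m.+1) u j * first_return (m.+1 - j)
        = \sum_(0 <= j < m) u j.+1 * first_return (m - j).
  by rewrite big_add1 /=; apply: eq_big_nat => j _; rewrite subSS.
rewrite [in LHS](_ : u m.+1 = u m.+1 / u m * u m); last by rewrite divfK ?gt_eqF.
rewrite (renewal_eq m0) mulr_sumr -sumrB; apply: eq_big_nat => j _.
by rewrite mulrA mulrBl.
Qed.

Lemma first_return_gt0 d : (0 < d)%N -> 0 < first_return d.
Proof.
elim/ltn_ind: d => d IH d0.
have [d1|d2] := ltnP d 2.
  have -> : d = 1%N by lia.
  by rewrite first_return_rec big_geq // subr0.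
have coef_gt0 j m : (j < m)%N -> 0 < u m.+1 / u m * u j - u j.+1.
  move=> jm; have um0 : u m != 0 by rewrite gt_eqF.
  have -> : u m.+1 / u m * u j - u j.+1 = (u m.+1 * u j - u j.+1 * u m) / u m.
    by field.
  by rewrite divr_gt0 // subr_gt0 u_logconvex.
case: d IH d0 d2 => [//|m] IH _ m0.
rewrite first_return_S_expansion // big_ltn // subn0.
apply: ltr_pwDl; first by rewrite mulr_gt0 ?coef_gt0 ?IH.
rewrite big_nat_cond; apply: sumr_ge0 => j /andP[/andP[j1 jm] _].
by rewrite mulr_ge0 // ltW // ?coef_gt0 ?IH //; lia.
Qed.

Definition no_return (m : nat) : R := 1 - \sum_(0 <= j < m) first_return j.+1.

Lemma no_return0 : no_return 0 = 1.
Proof. by rewrite /no_return big_geq // subr0. Qed.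

Lemma no_returnS m : no_return m.+1 = no_return m - first_return m.+1.
Proof. by rewrite /no_return big_nat_recr //=; ring. Qed.

Lemma no_return_gt0 m : 0 < no_return m.
Proof.
have [->|m0] := posnP m; first by rewrite no_return0.
have rev : \sum_(0 <= j < m) first_return j.+1 = \sum_(0 <= j < m) first_return (m - j).
  by rewrite big_nat_rev; apply: eq_big_nat => j /andP[_ jm]; congr first_return; lia.
rewrite /no_return rev subr_gt0 big_ltn // subn0.
have um := renewal_eq m0; rewrite big_ltn // subn0 u0 mul1r in um.
have tail_le : u m * \sum_(1 <= j < m) first_return (m - j)
               <= \sum_(1 <= j < m) u j * first_return (m - j).
  rewrite mulr_sumr big_nat_cond [X in _ <= X]big_nat_cond.
  apply: ler_sum => j /andP[/andP[j1 jm] _].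
  by rewrite ler_wpM2r ?u_nonincr ?ltW ?first_return_gt0 //; lia.
have fm_gt0 := first_return_gt0 m0; have um_lt1 := u_lt1 m0; have um_gt0 := u_gt0 m.
have : u m * (first_return m + \sum_(1 <= j < m) first_return (m - j)) < u m by nra.
by rewrite -[X in _ < X]mulr1 ltr_pM2l.
Qed.

Lemma sum_u_no_return m : \sum_(0 <= j < m.+1) u j * no_return (m - j) = 1.
Proof.
elim: m => [|m IH]; first by rewrite big_nat1 u0 no_return0 mulr1.
rewrite big_nat_recr // subnn no_return0 mulr1.
have -> : \sum_(0 <= j < m.+1) u j * no_return (m.+1 - j)
    = \sum_(0 <= j < m.+1) u j * no_return (m - j)
      - \sum_(0 <= j < m.+1) u j * first_return (m.+1 - j).
  rewrite -sumrB; apply: eq_big_nat => j /andP[_ jm].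
  by rewrite (_ : m.+1 - j = (m - j).+1)%N ?no_returnS ?mulrBr //; lia.
by rewrite IH -renewal_eq // /= subrK.
Qed.

Lemma u_sum_no_return_le1 m : u m * \sum_(0 <= i < m.+1) no_return i <= 1.
Proof.
rewrite -[X in _ <= X](sum_u_no_return m) big_nat_rev mulr_sumr /=.
rewrite big_nat_cond [X in _ <= X]big_nat_cond.
apply: ler_sum => j /andP[/andP[_ jm] _].
by rewrite add0n subSS ler_wpM2r ?u_nonincr ?ltW ?no_return_gt0 //; lia.
Qed.

Section Kernel.
Variables (n : nat) (P : R).
Hypotheses (P_gt0 : 0 < P) (P_le_u : P <= u n).

(* A delayed renewal process on [0, n]: started at 0, its first renewal falls at
   z with probability jump 0 z, each later one d steps after the previous with
   probability first_return d; kern y z is the probability of a renewal at z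
   given one at y. *)
Definition kern (y z : nat) : R := if y == 0%N then P else u (z - y).
Definition jump (y z : nat) : R :=
  if y == 0%N then P * no_return z.-1 else first_return (z - y).
Definition survive (w N : nat) : R := 1 - \sum_(w.+1 <= z < N.+1) jump w z.

Lemma jump_gt0 y z : (y < z)%N -> 0 < jump y z.
Proof.
rewrite /jump; case: eqP => [_ _|_ yz]; first by rewrite mulr_gt0 ?no_return_gt0.
by rewrite first_return_gt0 // subn_gt0.
Qed.

Lemma kern_renewal y z : (y < z)%N ->
  kern y z = jump y z + \sum_(y.+1 <= w < z) kern y w * jump w z.
Proof.
move=> yz; have [->|y0] := posnP y.
  have -> : \sum_(1 <= w < z) kern 0 w * jump w z
            = P * \sum_(0 <= j < z.-1) first_return j.+1.
    rewrite mulr_sumr big_add1 big_nat_rev /=; apply: eq_big_nat => j /andP[_ jz].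
    by rewrite /kern /jump /=; congr (_ * first_return _); lia.
  by rewrite /kern /jump /no_return /=; ring.
have -> : \sum_(y.+1 <= w < z) kern y w * jump w z
          = \sum_(1 <= j < z - y) u j * first_return (z - y - j).
  rewrite -add1n big_addn; apply: eq_big_nat => j /andP[j1 jz].
  rewrite /kern /jump !ifN; try lia.
  by congr (u _ * first_return _); lia.
by rewrite /kern /jump !ifN ?first_return_rec; try lia; ring.
Qed.

Lemma survive_self w : survive w w = 1.
Proof. by rewrite /survive big_geq // subr0. Qed.

Lemma survive_recr w N : (w < N)%N -> survive w N = survive w N.-1 - jump w N.
Proof. by case: N => // N wN; rewrite /survive big_nat_recr //=; ring. Qed.

Lemma survive_gt0 w : (w <= n)%N -> 0 < survive w n.
Proof.
move=> wn; have [->|w0] := posnP w.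
  rewrite /survive big_add1 /=.
  have -> : \sum_(0 <= i < n) jump 0 i.+1 = P * \sum_(0 <= i < n) no_return i.
    by rewrite mulr_sumr; apply: eq_big_nat => i _.
  have := u_sum_no_return_le1 n; rewrite big_nat_recr //=.
  have S_ge0 : 0 <= \sum_(0 <= i < n) no_return i.
    by apply: sumr_ge0 => i _; exact/ltW/no_return_gt0.
  have : 0 <= (u n - P) * \sum_(0 <= i < n) no_return i by rewrite mulr_ge0 ?subr_ge0.
  have := mulr_gt0 (u_gt0 n) (no_return_gt0 n).
  lra.
have -> : survive w n = no_return (n - w).
  rewrite /survive /no_return -add1n big_addn big_add1 /=.
  rewrite (_ : (n.+1 - w).-1 = n - w)%N; last by lia.
  congr (1 - _); apply: eq_big_nat => j _; rewrite /jump ifN; last by lia.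
  by congr first_return; lia.
exact: no_return_gt0.
Qed.

Local Notation T := 'I_n.+1.

Fixpoint path_weight (x : nat) (s : seq nat) : R :=
  if s is y :: t then kern x y * path_weight y t else 1.

Definition elems (S : {set T}) : seq nat := sort leq [seq val i | i <- enum S].
Definition weight (S : {set T}) : R := path_weight 0 (elems S).

(* weight S is the probability that every point of S is a renewal, so by
   inclusion-exclusion hit_avoid A B is the probability that every point of A
   and no point of B is one. *)
Definition hit_avoid (A B : {set T}) : R :=
  \sum_(B' in powerset B) (-1) ^+ #|B'| * weight (A :|: B').

Lemma path_weight_rcons x s z :
  path_weight x (rcons s z) = path_weight x s * kern (last x s) z.
Proof. by elim: s x => [|y t IH] x /=; rewrite ?mul1r ?mulr1 ?IH ?mulrA. Qed.

Lemma mem_elems (S : {set T}) x : (x \in elems S) = [exists i in S, val i == x].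
Proof.
rewrite /elems mem_sort; apply/mapP/existsP => [[i]|[i /andP[iS /eqP <-]]].
  by rewrite mem_enum => iS ->; exists i; rewrite iS eqxx.
by exists i; rewrite ?mem_enum.
Qed.

Lemma elems_sorted (S : {set T}) : sorted ltn (elems S).
Proof.
rewrite ltn_sorted_uniq_leq sort_uniq sort_sorted ?andbT; last exact: leq_total.
by rewrite map_inj_uniq ?enum_uniq //; apply: val_inj.
Qed.

Lemma elems_set0 : elems finset.set0 = [::].
Proof. by rewrite /elems enum_set0. Qed.

Lemma elems_setU1 (S : {set T}) (z : T) : {in S, forall i : T, (i < z)%N} ->
  elems (z |: S) = rcons (elems S) z.
Proof.
move=> Sz; apply: (irr_sorted_eq ltn_trans ltnn); first exact: elems_sorted.
  have := elems_sorted S; case E: (elems S) => [|x t] //= st.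
  rewrite rcons_path st /=.
  have : last x t \in elems S by rewrite E mem_last.
  by rewrite mem_elems => /existsP[i /andP[iS /eqP <-]]; apply: Sz.
move=> x; rewrite mem_rcons in_cons !mem_elems; apply/existsP/orP.
  move=> [i /andP[]]; rewrite in_setU1 => /orP[/eqP -> zx|iS ix].
    by left; rewrite eq_sym.
  by right; apply/existsP; exists i; rewrite iS.
case=> [/eqP ->|/existsP[i /andP[iS ix]]]; first by exists z; rewrite setU11 eqxx.
by exists i; rewrite in_setU1 iS orbT.
Qed.

Lemma last_elems (S : {set T}) (p : T) : p \in S ->
  {in S, forall i : T, i != p -> (i < p)%N} -> last 0%N (elems S) = p.
Proof.
move=> pS Sp; rewrite -(finset.setD1K pS) elems_setU1 ?last_rcons //.
by move=> i; rewrite in_setD1 => /andP[ip iS]; apply: Sp.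
Qed.

Lemma weight_set0 : weight finset.set0 = 1.
Proof. by rewrite /weight elems_set0. Qed.

Lemma weight_setU1 (S : {set T}) (z : T) : {in S, forall i : T, (i < z)%N} ->
  weight (z |: S) = weight S * kern (last 0%N (elems S)) z.
Proof. by move=> Sz; rewrite /weight elems_setU1 // path_weight_rcons. Qed.

Lemma hit_avoid_set0 : hit_avoid finset.set0 finset.set0 = 1.
Proof.
by rewrite /hit_avoid finset.powerset0 big_set1 cards0 expr0 mul1r finset.setU0 weight_set0.
Qed.

Lemma hit_avoid_set1 (z : T) : hit_avoid (z |: finset.set0) finset.set0 = kern 0 z.
Proof.
rewrite /hit_avoid finset.powerset0 big_set1 cards0 expr0 mul1r finset.setU0.
by rewrite weight_setU1 ?weight_set0 ?elems_set0 ?mul1r // => i; rewrite inE.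
Qed.

Lemma hit_avoid_setU1r (A B : {set T}) (p : T) : p \notin B ->
  hit_avoid A (p |: B) = hit_avoid A B - hit_avoid (p |: A) B.
Proof.
move=> pB; rewrite /hit_avoid (bigID (fun B' : {set T} => p \in B')) /= addrC.
congr (_ + _).
  apply: eq_bigl => B'; rewrite !powersetE; apply/andP/idP.
    move=> [/fintype.subsetP sB pB']; apply/fintype.subsetP => x xB'.
    have := sB x xB'; rewrite in_setU1 => /orP[/eqP xp|//].
    by move: pB'; rewrite -xp xB'.
  move=> /fintype.subsetP sB; split; last by apply/negP => /sB; rewrite (negbTE pB).
  by apply/fintype.subsetP => x /sB xB; rewrite in_setU1 xB orbT.
rewrite (reindex_onto (fun C : {set T} => p |: C) (fun D => D :\ p)) /=; last first.
  by move=> D /andP[_ pD]; rewrite finset.setD1K.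
rewrite -sumrN; apply: eq_big => C.
  rewrite !powersetE setU11 andbT; apply/andP/idP.
    move=> [/fintype.subsetP sC /eqP eC]; apply/fintype.subsetP => x xC.
    have xp : x != p by apply: contraTneq xC => ->; rewrite -eC setD11.
    by have := sC x (setU1r p xC); rewrite in_setU1 (negbTE xp).
  move=> /fintype.subsetP sC; have pC : p \notin C by apply/negP => /sC; rewrite (negbTE pB).
  split; last by rewrite finset.setU1K.
  by apply/fintype.subsetP => x; rewrite !in_setU1 => /orP[->//|/sC ->]; rewrite orbT.
move=> /andP[_ /eqP eC].
have pC : p \notin C by rewrite -eC setD11.
rewrite finset.cardsU1 pC /= exprS mulN1r mulNr; congr (- (_ * weight _)).
by rewrite finset.setUCA finset.setUA.
Qed.

Lemma hit_avoid_setU1l (A B : {set T}) (p z : T) : p \in A ->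
  {in A :|: B, forall i : T, i != p -> (i < p)%N} -> (p < z)%N ->
  hit_avoid (z |: A) B = hit_avoid A B * kern p z.
Proof.
move=> pA ABp pz; rewrite /hit_avoid mulr_suml; apply: eq_bigr => B'.
rewrite powersetE => /fintype.subsetP sB.
have AB'p : {in A :|: B', forall i : T, i != p -> (i < p)%N}.
  by move=> i; rewrite finset.in_setU => /orP[iA|/sB iB]; apply: ABp;
    rewrite finset.in_setU ?iA ?iB ?orbT.
rewrite -finset.setUA weight_setU1; last first.
  by move=> i iAB'; case: (eqVneq i p) => [->//|ip]; exact: ltn_trans (AB'p i iAB' ip) pz.
by rewrite (@last_elems _ p) ?mulrA // finset.in_setU pA.
Qed.

Definition extend (s : nat -> R) (p : nat) (x : R) (w : nat) : R :=
  if (w < p)%N then s w else x.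

Lemma sum_extend s p x (g : nat -> R) :
  \sum_(0 <= w < p.+1) extend s p x w * g w = \sum_(0 <= w < p) s w * g w + x * g p.
Proof.
rewrite big_nat_recr //= /extend ltnn; congr (_ + _).
by apply: eq_big_nat => w /andP[_ ->].
Qed.

(* s w is the probability that the renewals in [0, p) agree with A and B and
   that the last of them is w. *)
Definition decomposition (p : nat) (A B : {set T}) (s : nat -> R) : Prop :=
  [/\ forall w, 0 <= s w, exists2 w, (w < p)%N & 0 < s w,
      forall z : T, (p <= z)%N -> hit_avoid (z |: A) B =
        \sum_(0 <= w < p) s w * jump w z
        + \sum_(p <= w < z) hit_avoid (inord w |: A) B * jump w z
    & hit_avoid A B = \sum_(0 <= w < p) s w * survive w p.-1].

Lemma decomposition1 : decomposition 1 finset.set0 finset.set0 (fun=> 1).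
Proof.
split=> //; first by exists 0%N.
  move=> z z1; rewrite hit_avoid_set1 big_nat1 mul1r (kern_renewal z1).
  by congr (_ + _); apply: eq_big_nat => w _; rewrite hit_avoid_set1.
by rewrite hit_avoid_set0 big_nat1 survive_self mulr1.
Qed.

Lemma val_inord_lt w (z : T) : (w < z)%N -> (inord w : T) = w :> nat.
Proof. by move=> wz; rewrite inordK // (ltn_trans wz). Qed.

Section DecompositionStep.
Context {p : nat} {A B : {set T}} {s : nat -> R}.
Hypotheses (pn : (p <= n)%N) (ds : decomposition p A B s).

Let pp : T := inord p.
Let G := hit_avoid (pp |: A) B.

Lemma decomposition_next : G = \sum_(0 <= w < p) s w * jump w p.
Proof. by case: ds => _ _ hz _; rewrite /G hz ?inordK // [X in _ + X]big_geq // addr0. Qed.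

Lemma decomposition_next_gt0 : 0 < G.
Proof.
case: ds => s_ge0 [w0 w0p sw0] _ _; rewrite decomposition_next.
apply: (@sumr_nat_gt0 _ (fun w => s w * jump w p) p w0) => //.
  by move=> w wp; rewrite mulr_ge0 // ltW // jump_gt0.
by rewrite mulr_gt0 // jump_gt0.
Qed.

Lemma decomposition_skip : decomposition p.+1 A B (extend s p G).
Proof.
have [s_ge0 [w0 w0p sw0] hz hA] := ds.
split.
- by move=> w; rewrite /extend; case: ifP => // _; exact/ltW/decomposition_next_gt0.
- by exists w0; rewrite /extend ?w0p // ltnW.
- move=> z pz; rewrite sum_extend (hz z (ltnW pz)) (big_ltn pz).
  by rewrite -/pp -/G addrA.
rewrite sum_extend survive_self mulr1 hA decomposition_next -big_split /=.
by apply: eq_big_nat => w /andP[_ wp]; rewrite (survive_recr wp); ring.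
Qed.

Hypothesis AB_lt : {in A :|: B, forall i : T, (i < p)%N}.

Lemma hit_avoid_after_next (z : T) : (p < z)%N ->
  hit_avoid (z |: (pp |: A)) B = G * kern p z.
Proof.
move=> pz; rewrite (hit_avoid_setU1l (p:=pp)) ?setU11 // /pp ?inordK //.
by move=> i; rewrite -finset.setUA in_setU1 => /orP[/eqP->|/AB_lt]; rewrite ?eqxx.
Qed.

Lemma decomposition_setU1l : decomposition p.+1 (pp |: A) B (extend (fun=> 0) p G).
Proof.
have G_gt0 := decomposition_next_gt0.
have zero_sum (g : nat -> R) : \sum_(0 <= w < p) 0 * g w = 0.
  by rewrite big1 // => w _; rewrite mul0r.
split.
- by move=> w; rewrite /extend; case: ifP => // _; exact: ltW.
- by exists p; rewrite // /extend ltnn.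
- move=> z pz; rewrite sum_extend zero_sum add0r hit_avoid_after_next //.
  rewrite (kern_renewal pz) mulrDr mulr_sumr; congr (_ + _).
  apply: eq_big_nat => w /andP[pw wz].
  by rewrite hit_avoid_after_next ?(val_inord_lt wz) ?mulrA.
by rewrite sum_extend zero_sum add0r /= survive_self mulr1.
Qed.

Lemma decomposition_setU1r : decomposition p.+1 A (pp |: B) (extend s p 0).
Proof.
have [s_ge0 [w0 w0p sw0] hz hA] := ds.
have ppB : pp \notin B.
  apply/negP => ppB.
  have : (pp < p)%N by apply: AB_lt; rewrite finset.in_setU ppB orbT.
  by rewrite inordK ?ltnn.
have split_w (w : T) : (p < w)%N ->
    hit_avoid (w |: A) (pp |: B) = hit_avoid (w |: A) B - G * kern p w.
  by move=> pw; rewrite hit_avoid_setU1r // finset.setUCA hit_avoid_after_next.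
split.
- by move=> w; rewrite /extend; case: ifP.
- by exists w0; rewrite /extend ?w0p // ltnW.
- move=> z pz; rewrite sum_extend mul0r addr0 split_w // (hz z (ltnW pz)) (big_ltn pz).
  have -> : \sum_(p.+1 <= w < z) hit_avoid (inord w |: A) (pp |: B) * jump w z
      = \sum_(p.+1 <= w < z) hit_avoid (inord w |: A) B * jump w z
        - G * \sum_(p.+1 <= w < z) kern p w * jump w z.
    rewrite mulr_sumr -sumrB; apply: eq_big_nat => w /andP[pw wz].
    by rewrite split_w ?(val_inord_lt wz) // mulrBl mulrA.
  by rewrite -/pp -/G (kern_renewal pz); ring.
rewrite hit_avoid_setU1r // hA -/G decomposition_next sum_extend mul0r addr0 -sumrB.
by apply: eq_big_nat => w /andP[_ wp]; rewrite (survive_recr wp) [RHS]mulrBr.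
Qed.

End DecompositionStep.

Lemma decomposition_exists p (A B : {set T}) : (0 < p <= n.+1)%N -> [disjoint A & B] ->
  {in A :|: B, forall i : T, (0 < i < p)%N} -> exists s, decomposition p A B s.
Proof.
elim: p A B => [//|p IH] A B /andP[_ pn] dAB AB_in.
have [p0|p_gt0] := posnP p.
  have empty (C : {set T}) : C \subset A :|: B -> C = finset.set0.
    move=> /fintype.subsetP CAB; apply/finset.setP => i; rewrite inE.
    by apply/negbTE/negP => /CAB /AB_in; rewrite p0; lia.
  rewrite p0 (empty A (finset.subsetUl _ _)) (empty B (finset.subsetUr _ _)).
  by exists (fun=> 1); exact: decomposition1.
set pp : T := inord p.
have {}pn : (p <= n)%N by [].
have p_range : (0 < p <= n.+1)%N by rewrite p_gt0 ltnW.
have {}IH (C D : {set T}) :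
    [disjoint C & D] -> C :|: D \subset A :|: B -> pp \notin C :|: D ->
    exists2 s, decomposition p C D s & {in C :|: D, forall i : T, (i < p)%N}.
  move=> dCD /fintype.subsetP CD_AB ppCD.
  have CD_lt i : i \in C :|: D -> (0 < i < p)%N.
    move=> iCD; have /andP[i0 ip] := AB_in i (CD_AB i iCD).
    have ineq : (i : nat) != p.
      apply: contraNneq ppCD => ip'; suff -> : pp = i by [].
      by apply: val_inj; rewrite /= inordK ?ip'.
    by rewrite i0 ltn_neqAle ineq -ltnS.
  have [s ds] := IH C D p_range dCD CD_lt.
  by exists s => // i /CD_lt /andP[].
case: (boolP (pp \in A)) => ppA.
  rewrite -(finset.setD1K ppA).
  have [s ds AB_lt] : exists2 s, decomposition p (A :\ pp) B s
                                 & {in A :\ pp :|: B, forall i : T, (i < p)%N}.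
    apply: IH; first exact: disjointWl (subD1set _ _) dAB.
      by rewrite finset.setUSS // subD1set.
    by rewrite finset.in_setU setD11 (disjointFr dAB ppA).
  by eexists; exact: (decomposition_setU1l pn ds AB_lt).
case: (boolP (pp \in B)) => ppB.
  rewrite -(finset.setD1K ppB).
  have [s ds AB_lt] : exists2 s, decomposition p A (B :\ pp) s
                                 & {in A :|: B :\ pp, forall i : T, (i < p)%N}.
    apply: IH; first exact: disjointWr (subD1set _ _) dAB.
      by rewrite finset.setUSS // subD1set.
    by rewrite finset.in_setU setD11 (negbTE ppA).
  by eexists; exact: (decomposition_setU1r pn ds AB_lt).
have [s ds _] : exists2 s, decomposition p A B s
                    & {in A :|: B, forall i : T, (i < p)%N}.
  by apply: IH; rewrite ?subxx // finset.in_setU (negbTE ppA).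
by eexists; exact: (decomposition_skip pn ds).
Qed.

Lemma hit_avoid_gt0 (A B : {set T}) : ord0 \notin A -> ord0 \notin B -> [disjoint A & B] ->
  0 < hit_avoid A B.
Proof.
move=> A0 B0 dAB.
have AB_in : {in A :|: B, forall i : T, (0 < i < n.+1)%N}.
  move=> i iAB; rewrite ltn_ord andbT lt0n; apply: contraTneq iAB => i0.
  by rewrite (_ : i = ord0) ?finset.in_setU ?(negbTE A0) ?(negbTE B0) //; apply: val_inj.
have [s [s_ge0 [w0 w0n sw0] _ ->]] := @decomposition_exists n.+1 A B (leqnn n.+1) dAB AB_in.
apply: (@sumr_nat_gt0 _ (fun w => s w * survive w n) n.+1 w0) => //.
  by move=> w wn; rewrite mulr_ge0 // ltW // survive_gt0.
by rewrite mulr_gt0 // survive_gt0.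
Qed.

End Kernel.
End Renewal.

Lemma powR_gt_neg (R : realType) (a x y : R) :
  a < 0 -> 0 < x -> x < y -> y `^ a < x `^ a.
Proof.
move=> a0 x0 xy; have y0 := lt_trans x0 xy.
rewrite /powR (gt_eqF x0) (gt_eqF y0) ltr_expR ltr_nM2l //.
by rewrite ltr_ln ?posrE.
Qed.

Section PowerRenewal.
Variables (R : realType) (c a : R).
Hypotheses (a_lt0 : a < 0) (c_gt0 : 0 < c) (c_lt : c < 2 `^ a).

Definition u_pow (d : nat) : R := if d == 0%N then 1 else c * d%:R `^ a.

Lemma powR_nat_gt (i j : nat) : (0 < i)%N -> (i < j)%N -> j%:R `^ a < i%:R `^ a :> R.
Proof. by move=> i0 ij; rewrite powR_gt_neg ?ltr0n ?ltr_nat. Qed.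

Lemma powR_nat_ge (i j : nat) : (0 < i)%N -> (i <= j)%N -> j%:R `^ a <= i%:R `^ a :> R.
Proof.
by move=> i0; rewrite leq_eqVlt => /orP[/eqP->//|ij]; rewrite ltW ?powR_nat_gt.
Qed.

Lemma powR_nat_le1 (i : nat) : (0 < i)%N -> i%:R `^ a <= 1 :> R.
Proof.
move=> i0; have [i1|i1] := ltnP 1 i.
  by have := @powR_nat_gt 1 i isT i1; rewrite powR1 => /ltW.
by rewrite (_ : i = 1%N) ?powR1 //; lia.
Qed.

Lemma c_lt1 : c < 1.
Proof. by rewrite (lt_le_trans c_lt) // (powR_nat_le1 (i := 2)). Qed.

Lemma u_pow_gt0 d : 0 < u_pow d.
Proof. by rewrite /u_pow; case: eqP => // /eqP d0; rewrite mulr_gt0 ?powR_gt0 ?ltr0n ?lt0n. Qed.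

Lemma u_pow_lt1 d : (0 < d)%N -> u_pow d < 1.
Proof.
move=> d0; rewrite /u_pow gtn_eqF //.
by rewrite (le_lt_trans _ c_lt1) // ger_pMr // powR_nat_le1.
Qed.

Lemma u_pow_nonincr j m : (j <= m)%N -> u_pow m <= u_pow j.
Proof.
move=> jm; have [->|j0] := posnP j.
  by have [->|m0] := posnP m; [exact: lexx | exact/ltW/u_pow_lt1].
by rewrite /u_pow !gtn_eqF ?(leq_trans j0) // ler_pM2l // powR_nat_ge.
Qed.

Lemma u_pow_logconvex j m : (j < m)%N -> u_pow j.+1 * u_pow m < u_pow m.+1 * u_pow j.
Proof.
move=> jm; have m0 : (0 < m)%N by apply: leq_ltn_trans jm.
have powRM_nat x y : x%:R `^ a * y%:R `^ a = (x * y)%N%:R `^ a :> R.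
  by rewrite natrM powRM.
have [->|j0] := posnP j.
  rewrite /u_pow /= !gtn_eqF // (_ : 1%:R `^ a = 1) ?powR1 // !mulr1 ltr_pM2l //.
  apply: (@lt_le_trans _ _ (2%:R `^ a * m%:R `^ a)).
    by rewrite ltr_pM2r ?powR_gt0 ?ltr0n.
  by rewrite powRM_nat powR_nat_ge //; lia.
rewrite /u_pow !gtn_eqF //; try lia.
rewrite mulrACA [X in _ < X]mulrACA ltr_pM2l ?mulr_gt0 // !powRM_nat.
by apply: powR_nat_gt; nia.
Qed.

End PowerRenewal.

Lemma path_weight_u_pow (R : realType) (c a P : R) (y : nat) (t : seq nat) :
  (0 < y)%N -> path ltn y t ->
  path_weight (u_pow c a) P y t
  = c ^+ size t * \prod_(d <- pairmap (fun x z => (z - x)%N) y t) d%:R `^ a.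
Proof.
elim: t y => [|z t IH] y y0 /=; first by rewrite big_nil mulr1.
case/andP=> yz zt; rewrite big_cons IH ?(ltn_trans y0) //.
by rewrite /kern /u_pow !gtn_eqF ?subn_gt0 // exprS; ring.
Qed.

Lemma weight_Lcirc (R : realType) (H c lam : R) (n : nat) (S : {set 'I_n.+1}) :
  c != 0 -> pn H lam n != 0 -> ord0 \notin S ->
  weight (u_pow c (2 * H - 2)) (pn H lam n) S = pn H lam n * c ^ (#|S|%:Z - 1) * Lcirc H c lam S.
Proof.
move=> c0 P0 S0; rewrite /weight /Lcirc -/(elems S).
have size_S : size (elems S) = #|S| by rewrite size_sort size_map cardE.
have elems_gt0 x : x \in elems S -> (0 < x)%N.
  rewrite mem_elems => /existsP[i /andP[iS /eqP <-]]; rewrite lt0n.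
  by apply: contraNneq S0 => i0; rewrite (_ : ord0 = i) //; apply: val_inj.
have := elems_sorted S.
case: (elems S) size_S elems_gt0 => [|y t] /= <- elems_gt0 yt.
  by rewrite sub0r exprN1; field; rewrite P0 c0.
rewrite /kern /= (path_weight_u_pow _ _ _ (elems_gt0 y (mem_head _ _)) yt).
by rewrite intS [1 + _]addrC addrK mulrA.
Qed.

Lemma scaled_Dcirc (R : realType) (H c lam : R) (n : nat) (A B : {set 'I_n.+1}) :
  c != 0 -> pn H lam n != 0 -> ord0 \notin A -> ord0 \notin B -> [disjoint A & B] ->
  pn H lam n * c ^ (#|A|%:Z - 1) * Dcirc H c lam A B
  = hit_avoid (u_pow c (2 * H - 2)) (pn H lam n) A B.
Proof.
move=> c0 P0 A0 B0 dAB; rewrite /Dcirc /hit_avoid mulr_sumr.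
apply: eq_bigr => B'; rewrite powersetE => sB.
have B'0 : ord0 \notin B' by apply: contra B0; apply: (fintype.subsetP sB).
have card_AB' : #|A :|: B'| = (#|A| + #|B'|)%N.
  by apply/eqP; rewrite (leq_card_setU A B').2 // (disjointWr sB dAB).
rewrite weight_Lcirc ?finset.in_setU ?negb_or ?A0 // card_AB' PoszD addrAC [in RHS]expfzDr //.
rewrite (_ : c ^ #|B'|%:Z = c ^+ #|B'|) //; set X := c ^ (_ - 1); ring.
Qed.

Theorem lemma2p3 (R : realType) (H c lam : R)
  (hH : 1 / 2 < H) (hH1 : H < 1)
  (hc : 0 < c) (hc2 : c < (2 : R) `^ (2 * H - 2))
  (hl : 0 < lam) (hlc : lam < c)
  (n : nat) (hn : (0 < n)%N) (A B : {set 'I_n.+1})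
  (hA0 : ord0 \notin A) (hB0 : ord0 \notin B) (hAB : [disjoint A & B]) :
  0 < pn H lam n * c ^ (#|A|%:Z - 1) * Dcirc H c lam A B.
Proof.
have a_lt0 : 2 * H - 2 < 0 by lra.
have P_gt0 : 0 < pn H lam n by rewrite mulr_gt0 // powR_gt0 // ltr0n.
have P_le_u : pn H lam n <= u_pow c (2 * H - 2) n.
  by rewrite /u_pow gtn_eqF // ler_pM2r ?powR_gt0 ?ltr0n // ltW.
rewrite scaled_Dcirc ?gt_eqF //.
apply: (hit_avoid_gt0 _ _ _ _ _ P_gt0 P_le_u) => //.
- exact: u_pow_gt0.
- exact: u_pow_lt1.
- exact: u_pow_nonincr.
- exact: u_pow_logconvex.
Qed.
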